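(* In the setting described in the context, let $\epsilon\in\{\pm1\}$ be the sign of $a(\tilde\alpha_0h')$ and $l=|a(\tilde\alpha_0h')|/t$. Then for every $0\le j\le r$ there is an integer $m_j\in\mathbb Z$ such that $\epsilon l\alpha_j=\tilde\alpha_jh'+m_jh'$.
   Context: Let $\mathbb K$ be a number field of degree $d=r+2\ge2$ with exactly one pair of complex conjugate embeddings; order its embeddings $\sigma_1,\dots,\sigma_r$ (real), $\sigma_{\mathbb C}$, $\overline{\sigma_{\mathbb C}}$. A $\mathbb Q$-basis $(e_0,\dots,e_{r+1})$ of $\mathbb K$ is positive if $i\cdot\det(\sigma_j(e_{k-1}))_{1\le j,k\le d}>0$. Let $\mathfrak f\ne\mathcal O_{\mathbb K}$ be an integral ideal, $q\mathbb Z=\mathfrak f\cap\mathbb Z$, $\mathfrak b$ an integral ideal coprime to $\mathfrak f$, $L=\mathfrak f\mathfrak b^{-1}$, $\mathfrak a$ an integral ideal coprime to $\mathfrak f\mathfrak b$ with $\mathfrak a^{-1}L/L$ cyclic, $N=\mathcal N(\mathfrak a)$. An element $h\in L$ is admissible if $h/q-1\in L$ and $h/N$ generates $\mathfrak a^{-1}L/L$. Let $\mathcal O^{+,\times}_{\mathfrak f}$ be the group of units $\equiv1\bmod\mathfrak f$ positive at all real embeddings. Let $u_1,\dots,u_r\in\mathcal O^{+,\times}_{\mathfrak f}$ with $1,u_1,\dots,u_r$ linearly independent over $\mathbb Q$, $u_0=1$. For $h$: $h\in L$ admissible, $h=mh'$, $m\in\mathbb Z_{>0}$, $h'$ primitive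 in $L$. Fix a positive $\mathbb Z$-basis $(e_0=h',e_1,\dots,e_{r+1})$ of $L$ with $u_jh'=\sum_{k=0}^jc_{jk0}e_k$, $c_{jk0}\in\mathbb Z$, $c_{jj0}>0$; $\lambda=\prod_jc_{jj0}$; $a:L\to\mathbb Z$ with $\lambda a=\det(h',u_1h',\dots,u_rh',\cdot)$ in this basis; $au_j:y\mapsto a(u_jy)$; $\mathcal A=(au_j(e_k))_{0\le j\le r,1\le k\le r+1}$, elementary divisors $1=A_0\mid\dots\mid A_r$, $t=A_r$; $\alpha_j=\sum_{i=1}^{r+1}b_{ij}e_i$ with $(b_{ij})=t\mathcal A^{-1}$, so $au_k(\alpha_j)=t\delta_{jk}$. For $1$: fix a positive $\mathbb Z$-basis $(1,\tilde e_1,\dots,\tilde e_{r+1})$ of $\mathcal O_{\mathbb K}$ with $u_j=\sum_{k=0}^j\tilde c_{jk0}\tilde e_k$ ($\tilde e_0=1$), $\tilde c_{jj0}>0$; $\tilde\lambda=\prod_j\tilde c_{jj0}$; $\tilde a$ with $\tilde\lambda\tilde a=\det(1,u_1,\dots,u_r,\cdot)$; $\tilde{\mathcal A}=(\tilde au_j(\tilde e_k))$, elementary divisors $1=\tilde A_0\mid\dots\mid\tilde A_r$, $\tilde t=\tilde A_r$; $\tilde\alpha_j=\sum_{i=1}^{r+1}\tilde b_{ij}\tilde e_i$ with $(\tilde b_{ij})=\tilde t\tilde{\mathcal A}^{-1}$. *)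

From HB Require Import structures.
From mathcomp Require Import all_boot all_order all_algebra all_field.
From mathcomp Require Import algC.
Set Implicit Arguments. Unset Strict Implicit. Unset Printing Implicit Defensive.
Import Order.TTheory GRing.Theory Num.Theory.
Local Open Scope ring_scope.

Section NF.
Variable K : fieldExtType rat.

Definition kset := K -> Prop.

Definition OK : kset := fun x =>
  exists p : {poly int}, p \is monic /\ root (map_poly (fun z : int => z%:~R : K) p) x.

Definition frac_ideal (I : kset) : Prop :=
  [/\ exists x, I x /\ x != 0, I 0,
      (forall x y, I x -> I y -> I (x - y)),
      (forall a x, OK a -> I x -> I (a * x)) &
      exists d, d != 0 /\ forall x, I x -> OK (d * x)].

Definition int_ideal (I : kset) : Prop := frac_ideal I /\ forall x, I x -> OK x.

Definition iprod (I J : kset) : kset := fun x =>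
  exists s : seq (K * K), (forall p, p \in s -> I p.1 /\ J p.2) /\
    x = \sum_(p <- s) p.1 * p.2.

Definition ideal_inv (I : kset) : kset := fun x => forall y, I y -> OK (x * y).

Definition icoprime (I J : kset) : Prop :=
  forall x, OK x -> exists y z, [/\ I y, J z & x = y + z].

(* N = #(O_K / I): absolute norm of the integral ideal I *)
Definition ideal_norm (I : kset) (N : nat) : Prop :=
  exists s : seq K, [/\ size s = N, (forall x, x \in s -> OK x),
    uniq s, (forall x y, x \in s -> y \in s -> I (x - y) -> x = y) &
    (forall x, OK x -> exists2 y, y \in s & I (x - y))].

Definition generates_quot (M L : kset) (g : K) : Prop :=
  M g /\ forall x, M x -> exists n : int, L (x - n%:~R * g).

Definition primitive_in (L : kset) (x : K) : Prop :=
  L x /\ forall (n : int) y, L y -> x = n%:~R * y -> n = 1 \/ n = -1.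

Definition Zbasis n (L : kset) (e : 'I_n -> K) : Prop :=
  [/\ forall i, L (e i),
      (forall x, L x -> exists c : 'I_n -> int, x = \sum_i (c i)%:~R * e i) &
      (forall c : 'I_n -> int, \sum_i (c i)%:~R * e i = 0 -> forall i, c i = 0)].

Definition pos_basis n (sigma : 'I_n -> {rmorphism K -> algC}) (e : 'I_n -> K) :=
  0 < 'i * \det (\matrix_(j, k) sigma j (e k)).

Definition coords n (e : 'I_n -> K) (i : 'I_n) (y : K) : rat :=
  coord [tuple e k | k < n] i y.

Definition det_in r (e : 'I_r.+2 -> K) (w : 'I_r.+1 -> K) (y : K) : rat :=
  \det (\matrix_(i, k) coords e i
          (if (k < r.+1)%N then w (inord k) else y)).

Definition uvec r (u : 'I_r -> K) (j : 'I_r.+1) : K :=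
  match unlift ord0 j with Some j' => u j' | None => 1 end.

(* u lies in O^{+,x}_f: unit of O_K, = 1 mod f, positive at the real embeddings
   sigma_0, ..., sigma_{r-1} *)
Definition unit_pos_mod r (sigma : 'I_r.+2 -> {rmorphism K -> algC}) (f : kset) (u : K) :=
  [/\ u != 0, OK u, OK u^-1, f (u - 1) &
      forall i : 'I_r.+2, (i < r)%N -> 0 < sigma i u].

Definition Amat r (aa : K -> int) (u : 'I_r -> K) (e : 'I_r.+2 -> K) : 'M[int]_r.+1 :=
  \matrix_(j, k) aa (uvec u j * e (lift ord0 k)).

Definition alpha_vec r (e : 'I_r.+2 -> K) (A : 'M[int]_r.+1) (t : int) (j : 'I_r.+1) : K :=
  \sum_(i < r.+1)
     ((t%:~R *: invmx (map_mx (fun z : int => z%:~R : rat) A)) i j) *: e (lift ord0 i).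

End NF.

Definition last_elem_div n (M : 'M[int]_n.+1) (t : int) : Prop :=
  exists (P Q : 'M[int]_n.+1) (d : 'I_n.+1 -> int),
    [/\ P \in unitmx, Q \in unitmx, (forall i, 0 <= d i),
        (forall i : 'I_n, (d (widen_ord (leqnSn n) i) %| d (lift ord0 i))%Z) &
        M = P *m diag_mx (\row_i d i) *m Q] /\ t = d ord_max.

(* Let F y = det(u_0 h', ..., u_r h', y) in the basis e of L and G y = det(1, u_1, ..., u_r, y)
   in the basis of O_K; up to the factors lambda and lambda~ these are the forms a and a~.
   Both y |-> F (y h') and G vanish exactly on the Q-span of the u_j, so they are proportional,
   and hence F (u_k alpha~_j h') = c delta_kj for a constant c, just as F (u_k alpha_j) is a
   multiple of delta_kj.  As A is invertible, a family with this duality property is determined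
   up to Q h' once its scale is fixed, and the scale is fixed by a (alpha~_0 h') = eps l t.  So
   eps l alpha_j - alpha~_j h' is a rational multiple of h', whose coefficient is an integer:
   alpha~_j h' lies in L because t~ A~^-1 is integral (Smith normal form). *)

From HB Require Import structures.
From mathcomp Require Import all_boot all_order all_algebra all_field.
From mathcomp Require Import algC algnum ring.
Import Order.TTheory GRing.Theory Num.Theory.
Local Open Scope ring_scope.
Set Implicit Arguments. Unset Strict Implicit.

Section IntegralElements.
Variables (K : fieldExtType rat) (s0 : {rmorphism K -> algC}).

Lemma OK_Aint (x : K) : OK x <-> s0 x \in Aint.
Proof.
have map_int (p : {poly int}) :
    map_poly s0 (map_poly (fun z : int => z%:~R : K) p) = map_poly intr p.
  by rewrite -map_poly_comp; apply: eq_map_poly => z /=; rewrite rmorph_int.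
have lead_int (p : {poly int}) :
    lead_coef (map_poly (fun z : int => z%:~R : algC) p) = (lead_coef p)%:~R.
  by rewrite (lead_coef_map_inj (@intr_inj _) (rmorph0 _)).
split.
- move=> [p [mp rp]]; apply: (@root_monic_Aint (map_poly intr p)).
  + by rewrite -map_int fmorph_root.
  + by rewrite monicE lead_int (monicP mp).
  + by apply/polyOverP => i; rewrite coef_map /= rpred_int.
- move=> /floorpP [p Dp]; exists p; split.
  + have := minCpoly_monic (s0 x); rewrite Dp monicE lead_int => /eqP lp1.
    by rewrite monicE; apply/eqP/(@intr_inj algCnumField).
  + by rewrite -(fmorph_root s0) map_int -Dp root_minCpoly.
Qed.

Lemma OK_mul (x y : K) : OK x -> OK y -> OK (x * y).
Proof. by move=> /OK_Aint Ax /OK_Aint Ay; apply/OK_Aint; rewrite rmorphM rpredM. Qed.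

End IntegralElements.

Lemma OK_int (K : fieldExtType rat) (z : int) : OK (z%:~R : K).
Proof.
exists ('X - z%:P); split; first exact: monicXsubC.
by rewrite rmorphB /= map_polyX map_polyC /= root_XsubC.
Qed.

Lemma OK_uvec (K : fieldExtType rat) r (u : 'I_r -> K) k :
  (forall j, OK (u j)) -> OK (uvec u k).
Proof.
move=> OKu; rewrite /uvec; case: unliftP => [j|] _; first exact: OKu.
by rewrite -(mulr1z 1); exact: OK_int.
Qed.

Section IdealProduct.
Variables (K : fieldExtType rat) (I J : kset K).
Hypothesis I_ideal : frac_ideal I.

Lemma iprod0 : iprod I J 0.
Proof. by exists [::]; split => //; rewrite big_nil. Qed.

Lemma iprodD x y : iprod I J x -> iprod I J y -> iprod I J (x + y).
Proof.
move=> [s [hs ->]] [s' [hs' ->]]; exists (s ++ s'); split; last by rewrite big_cat.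
by move=> p; rewrite mem_cat => /orP [/hs|/hs'].
Qed.

Lemma iprod_OKmul a x : OK a -> iprod I J x -> iprod I J (a * x).
Proof.
have [_ _ _ I_OKmul _] := I_ideal; move=> OKa [s [hs ->]].
exists [seq (a * p.1, p.2) | p <- s]; split.
  by move=> p /mapP [q /hs [Iq Jq] ->]; split => //; exact: I_OKmul.
by rewrite big_map mulr_sumr; apply: eq_bigr => p _; rewrite mulrA.
Qed.

Lemma iprod_zlin (z : int) x y : iprod I J x -> iprod I J y -> iprod I J (z%:~R * x + y).
Proof. by move=> Ix Iy; apply: iprodD Iy; apply: iprod_OKmul Ix; exact: OK_int. Qed.

End IdealProduct.

HB.instance Definition _ (K : fieldExtType rat) n (b : 'I_n -> K) i :=
  GRing.isSemilinear.Build rat K rat _ (coords b i)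
    (GRing.semilinear_linear (linearP (coord [tuple b k | k < n] i))).

Lemma free_mulr (K : fieldExtType rat) n (v : 'I_n -> K) x :
  free [tuple v j | j < n] -> x != 0 -> free [tuple v j * x | j < n].
Proof.
move=> /freeP vfree x_neq0; apply/freeP => k sum_k0 i; apply: vfree.
apply: (mulIf x_neq0); rewrite mul0r -{}[RHS]sum_k0 mulr_suml.
by apply: eq_bigr => j _; rewrite !nth_mktuple scalerAl.
Qed.

Section Basis.
Variables (K : fieldExtType rat) (n : nat) (b : 'I_n -> K).
Hypotheses (dimK : \dim {:K} = n) (bfree : free [tuple b k | k < n]).

Lemma span_basis : <<[tuple b k | k < n]>>%VS = fullv.
Proof.
apply/eqP; rewrite eqEdim subvf /=.
by move: bfree => /eqP->; rewrite size_tuple dimK.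
Qed.

Lemma coordsK y : \sum_i coords b i y *: b i = y.
Proof.
have := @coord_span _ _ _ [tuple b k | k < n] y; rewrite span_basis memvf => /(_ isT) yE.
by rewrite [RHS]yE; apply: eq_bigr => i _; rewrite nth_mktuple.
Qed.

Lemma coords_sum (c : 'I_n -> rat) j : coords b j (\sum_i c i *: b i) = c j.
Proof.
rewrite /coords -(coord_sum_free c j bfree); congr coord.
by apply: eq_bigr => i _; rewrite nth_mktuple.
Qed.

Lemma coords_basis i j : coords b j (b i) = (i == j)%:R.
Proof. by have := coord_free i j bfree; rewrite nth_mktuple. Qed.

Lemma coords_eq0 y : (forall i, coords b i y = 0) -> y = 0.
Proof. by move=> y0; rewrite -(coordsK y) big1 // => i _; rewrite y0 scale0r. Qed.

Lemma exists_notin_span m (v : 'I_m -> K) :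
  (m < n)%N -> exists y, y \notin <<[tuple v j | j < m]>>%VS.
Proof.
move=> lt_mn.
have [/forallP b_in | /forallPn [i bi_notin]] :=
  boolP [forall i, b i \in <<[tuple v j | j < m]>>%VS]; last by exists (b i).
have : (fullv <= <<[tuple v j | j < m]>>)%VS.
  by rewrite -span_basis; apply/span_subvP => _ /mapP [i _ ->].
move=> /dimvS; rewrite dimK => /leq_trans/(_ (dim_span _)).
by rewrite size_tuple leqNgt lt_mn.
Qed.

End Basis.

Lemma Zbasis_free (K : fieldExtType rat) n (L : kset K) (e : 'I_n -> K) :
  Zbasis L e -> free [tuple e k | k < n].
Proof.
move=> [_ _ Zfree]; apply/freeP => k sum_k0 i.
pose D : int := \prod_j denq (k j).
have D_neq0 : D != 0 by apply: lt0r_neq0; apply: prodr_gt0 => j _; exact: denq_gt0.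
pose c j : int := numq (k j) * \prod_(l | l != j) denq (k l).
have cE j : (c j)%:~R = D%:~R * k j.
  by rewrite /c /D [in RHS](bigD1 j) //= !intrM numqE -!mulrA mulrC -!mulrA.
have : \sum_j (c j)%:~R * e j = 0.
  transitivity ((D%:~R : rat) *: \sum_j k j *: [tuple e k | k < n]`_j).
    by rewrite scaler_sumr; apply: eq_bigr => j _;
      rewrite -tnth_nth tnth_mktuple scalerA -cE scaler_int mulrzl.
  by rewrite sum_k0 scaler0.
move=> /Zfree /(_ i) ci0; have /esym/eqP := cE i.
by rewrite ci0 mulf_eq0 intr_eq0 (negbTE D_neq0) => /eqP.
Qed.

Lemma Zbasis_coords (K : fieldExtType rat) n (L : kset K) (e : 'I_n -> K) y :
  Zbasis L e -> L y -> exists c : 'I_n -> int, forall i, coords e i y = (c i)%:~R.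
Proof.
move=> eL Ly; have [_ /(_ y Ly) [c ->] _] := eL; exists c => i.
rewrite -(coords_sum (Zbasis_free eL) (fun i => (c i)%:~R)); congr coords.
by apply: eq_bigr => k _; rewrite scaler_int mulrzl.
Qed.

Lemma memv_span_mktuple (F : fieldType) (vT : vectType F) n (v : 'I_n -> vT) k :
  v k \in <<[tuple v j | j < n]>>%VS.
Proof. by rewrite memv_span // -[v k](nth_mktuple v 0) mem_nth // size_tuple. Qed.

Lemma memv_span_mulr (K : fieldExtType rat) n (v : 'I_n -> K) x y :
  y \in <<[tuple v j | j < n]>>%VS -> y * x \in <<[tuple (v j * x)%R | j < n]>>%VS.
Proof.
move=> /coord_span ->; rewrite mulr_suml rpred_sum // => k _.
by rewrite -scalerAl rpredZ // nth_mktuple (memv_span_mktuple (fun j => v j * x)).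
Qed.

Section DetForm.
Variables (K : fieldExtType rat) (r : nat) (b : 'I_r.+2 -> K) (w : 'I_r.+1 -> K).

Lemma det_inE y : det_in b w y =
  \sum_i coords b i y *
    cofactor (\matrix_(i, k) coords b i (if (k < r.+1)%N then w (inord k) else 0)) i ord_max.
Proof.
rewrite /det_in (expand_det_col _ ord_max); apply: eq_bigr => i _.
rewrite mxE ltnn; congr (_ * (_ * \det _)); apply/matrixP => p q.
by rewrite !mxE lift_max ltn_ord.
Qed.

Lemma det_in_is_scalar : scalar (det_in b w).
Proof.
move=> a x y; rewrite !det_inE mulr_sumr -big_split; apply: eq_bigr => i _.
by rewrite linearP mulrDl [in RHS]mulrA.
Qed.

End DetForm.

HB.instance Definition _ (K : fieldExtType rat) r (b : 'I_r.+2 -> K) w :=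
  GRing.isSemilinear.Build rat K rat _ (det_in b w)
    (GRing.semilinear_linear (@det_in_is_scalar K r b w)).

Section DetFormKernel.
Variables (K : fieldExtType rat) (r : nat) (b : 'I_r.+2 -> K) (w : 'I_r.+1 -> K).

Lemma det_in_span y : y \in <<[tuple w j | j < r.+1]>>%VS -> det_in b w y = 0.
Proof.
move=> /coord_span ->; rewrite linear_sum big1 // => k _; rewrite linearZ /= nth_mktuple.
suff -> : det_in b w (w k) = 0 by rewrite mulr0.
rewrite /det_in -det_tr.
apply: (@determinant_alternate _ _ _ (widen_ord (leqnSn _) k) ord_max).
  by rewrite -val_eqE /= neq_ltn ltn_ord.
by move=> i; rewrite !mxE /= ltn_ord ltnn inord_val.
Qed.

Hypotheses (dimK : \dim {:K} = r.+2) (bfree : free [tuple b k | k < r.+2]).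
Hypothesis wfree : free [tuple w j | j < r.+1].

Lemma det_in_eq0_span y : det_in b w y = 0 -> y \in <<[tuple w j | j < r.+1]>>%VS.
Proof.
rewrite /det_in -det_tr => /eqP/det0P [x x_neq0 /rowP xM0].
pose col k := if (k < r.+1)%N then w (inord k) else y.
have colE (k : 'I_r.+1) : col (widen_ord (leqnSn _) k) = w k.
  by rewrite /col /= ltn_ord inord_val.
have : \sum_k x 0 k *: col k = 0.
  apply: (coords_eq0 dimK bfree) => i; have := xM0 i; rewrite !mxE => M0.
  by rewrite linear_sum -[RHS]M0; apply: eq_bigr => k _; rewrite linearZ !mxE.
rewrite big_ord_recr /= {2}/col ltnn.
under eq_bigr do rewrite colE.
have [xr0 | xr_neq0] := eqVneq (x 0 ord_max) 0.
  rewrite xr0 scale0r addr0 => rel0; case/eqP: x_neq0; apply/rowP => k; rewrite mxE.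
  have x_widen0 (j : 'I_r.+1) : x 0 (widen_ord (leqnSn _) j) = 0.
    apply: (elimT freeP wfree (fun j => x 0 (widen_ord (leqnSn _) j))).
    rewrite -[RHS]rel0.
    by apply: eq_bigr => i _; rewrite nth_mktuple.
  case: (unliftP ord_max k) => [j|] -> //; rewrite -(x_widen0 j).
  by congr (x 0 _); apply: val_inj; exact: lift_max.
move=> /eqP; rewrite addrC addr_eq0 => /eqP y_eq; rewrite (canRL (scalerK xr_neq0) y_eq).
by rewrite rpredZ // rpredN rpred_sum // => k _; rewrite rpredZ // memv_span_mktuple.
Qed.

Lemma det_in_neq0 : exists y, det_in b w y != 0.
Proof.
have [y y_notin] := exists_notin_span dimK bfree w (ltnSn _).
by exists y; apply: contra y_notin => /eqP/det_in_eq0_span.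
Qed.

End DetFormKernel.

Lemma scalar_proportional (V : lmodType rat) (phi psi : V -> rat) y0 :
  scalar phi -> scalar psi -> psi y0 != 0 -> (forall y, psi y = 0 -> phi y = 0) ->
  forall y, phi y = phi y0 / psi y0 * psi y.
Proof.
move=> phiP psiP psi_y0 ker_psi y; set c := psi y / psi y0.
have : psi ((- c) *: y0 + y) = 0 by rewrite psiP /c mulNr divfK // addNr.
move=> /ker_psi /eqP; rewrite phiP mulNr addrC subr_eq0 => /eqP ->.
by rewrite /c; ring.
Qed.

Lemma det_in_mulr_proportional (K : fieldExtType rat) r (b b' : 'I_r.+2 -> K)
    (v w : 'I_r.+1 -> K) x :
  \dim {:K} = r.+2 -> free [tuple b' k | k < r.+2] -> free [tuple v j | j < r.+1] ->
  (forall j, w j = v j * x) ->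
  exists C, forall y, det_in b w (y * x) = C * det_in b' v y.
Proof.
move=> dimK b'free vfree wE; have [y0 y0_neq0] := det_in_neq0 dimK b'free vfree.
exists (det_in b w (y0 * x) / det_in b' v y0).
apply: (scalar_proportional (phi := fun y => det_in b w (y * x))) y0_neq0 _ => //.
- by move=> a y z /=; rewrite mulrDl -scalerAl linearP.
- exact: linearP.
move=> y /(det_in_eq0_span dimK b'free vfree) /(memv_span_mulr x) y_in.
by apply: det_in_span; rewrite (eq_mktuple _ wE).
Qed.

Lemma dvdz_chain_max n (d : 'I_n.+1 -> int) :
    (forall i : 'I_n, (d (widen_ord (leqnSn n) i) %| d (lift ord0 i))%Z) ->
  forall i, (d i %| d ord_max)%Z.
Proof.
move=> d_chain i; pose g k := d (inord k).
have g_homo : {in [pred k | k <= n]%N &, {homo g : k l / (k <= l)%N >-> (k %| l)%Z}}.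
  apply: homo_leq_in => [k | l k m | k l _ l_le m /andP [_ /ltnW m_le] | k _ k_lt].
  - exact: dvdzz.
  - exact: dvdz_trans.
  - exact: leq_trans m_le l_le.
  have := d_chain (Ordinal k_lt); congr (d _ %| d _)%Z; apply: val_inj; rewrite /= inordK //.
  exact: ltnW.
have := g_homo i n (ltn_ord i) (leqnn n) (ltn_ord i).
by rewrite /g inord_val; congr (_ %| d _)%Z; apply: val_inj; rewrite /= inordK.
Qed.

Section LastElementaryDivisor.
Variables (n : nat) (M : 'M[int]_n.+1) (t : int).
Hypothesis Mt : last_elem_div M t.

Lemma last_elem_div_mulmx : exists X : 'M[int]_n.+1, M *m X = t%:M.
Proof.
case: Mt => P [Q [d [[P_unit Q_unit _ d_chain ->] ->]]].
exists (invmx Q *m diag_mx (\row_i (d ord_max %/ d i)%Z) *m invmx P).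
rewrite -!mulmxA (mulmxA Q) mulmxV // mul1mx (mulmxA (diag_mx _)).
have -> : diag_mx (\row_i d i) *m diag_mx (\row_i (d ord_max %/ d i)%Z) = (d ord_max)%:M.
  apply/matrixP => i j; rewrite mul_diag_mx !mxE.
  have [->|_] := eqVneq i j; last by rewrite !mulr0n mulr0.
  by rewrite !mulr1n mulrC divzK // dvdz_chain_max.
by rewrite mul_scalar_mx -scalemxAr mulmxV // scalemx1.
Qed.

Lemma last_elem_div_gt0 : \det M != 0 -> 0 < t.
Proof.
case: Mt => P [Q [d [[_ _ d_ge0 _ ->] ->]]].
rewrite !det_mulmx det_diag => det_neq0; rewrite lt_def d_ge0 andbT.
by apply: contraNneq det_neq0 => d0; rewrite (bigD1 ord_max) //= mxE d0 mul0r mulr0 mul0r.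
Qed.

End LastElementaryDivisor.

Lemma alpha_vec_mul_closed (K : fieldExtType rat) r (S : kset K) (b : 'I_r.+2 -> K)
    (A : 'M[int]_r.+1) t x :
    S 0 -> (forall (z : int) y1 y2, S y1 -> S y2 -> S (z%:~R * y1 + y2)) ->
    (forall i, S (b (lift ord0 i) * x)) ->
    map_mx (fun z : int => z%:~R : rat) A \in unitmx -> last_elem_div A t ->
  forall j, S (alpha_vec b A t j * x).
Proof.
move=> S0 S_lin Sbx A_unit /last_elem_div_mulmx [X AX] j; rewrite /alpha_vec.
have -> : t%:~R *: invmx (map_mx (fun z : int => z%:~R : rat) A) = map_mx intr X.
  by rewrite -[map_mx _ X](mulKmx A_unit) -map_mxM AX map_scalar_mx mul_mx_scalar.
rewrite mulr_suml; apply: (big_ind S) => // [y1 y2 S1 S2|i _].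
  by rewrite -[y1]mul1r -[1]/(1%:~R); exact: S_lin.
by rewrite mxE -scalerAl scaler_int -mulrzl -[y in S y]addr0; apply: S_lin.
Qed.

Lemma uvec0 (K : fieldExtType rat) r (u : 'I_r -> K) : uvec u ord0 = 1.
Proof. by rewrite /uvec unlift_none. Qed.

Section DualFamily.
Variables (K : fieldExtType rat) (r : nat) (u : 'I_r -> K) (b : 'I_r.+2 -> K).
Variables (w : 'I_r.+1 -> K) (S : kset K) (aa : K -> int) (P : rat).
Hypotheses (dimK : \dim {:K} = r.+2) (ufree : free [tuple uvec u j | j < r.+1]).
Hypotheses (bfree : free [tuple b k | k < r.+2]) (wE : forall j, w j = uvec u j * b ord0).
Hypotheses (P_neq0 : P != 0) (aaE : forall y, S y -> P * (aa y)%:~R = det_in b w y).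
Hypothesis S_ub : forall k i, S (uvec u k * b (lift ord0 i)).

Local Notation F := (det_in b w).
Local Notation A := (map_mx (fun z : int => z%:~R : rat) (Amat aa u b)).

Lemma wfree : free [tuple w j | j < r.+1].
Proof.
rewrite (eq_mktuple _ wE) free_mulr //; apply: (free_not0 bfree).
by rewrite -[b ord0](nth_mktuple b 0) mem_nth // size_tuple.
Qed.

Lemma det_in_uvec_mul_b0 k : F (uvec u k * b ord0) = 0.
Proof. by rewrite -wE det_in_span // memv_span_mktuple. Qed.

Lemma AmatE k i : A k i = P^-1 * F (uvec u k * b (lift ord0 i)).
Proof. by rewrite -aaE // mulKf // !mxE. Qed.

Lemma det_in_mul_uvec_sum (x : 'I_r.+1 -> rat) y :
  F ((\sum_k x k *: uvec u k) * y) = \sum_k x k * F (uvec u k * y).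
Proof.
by rewrite mulr_suml linear_sum; apply: eq_bigr => k _; rewrite -scalerAl linearZ.
Qed.

Lemma Amat_unit : A \in unitmx.
Proof.
rewrite unitmxE unitfE; apply/negP => /det0P [x x_neq0 /rowP xA0].
pose v := \sum_k x 0 k *: uvec u k.
have Fvb i : F (v * b i) = 0.
  case: (unliftP ord0 i) => [i'|] ->; last first.
    by rewrite det_in_mul_uvec_sum big1 // => k _; rewrite det_in_uvec_mul_b0 mulr0.
  have := xA0 i'; rewrite !mxE => xA0i; apply: (mulfI (invr_neq0 P_neq0)).
  rewrite mulr0 -[RHS]xA0i det_in_mul_uvec_sum mulr_sumr.
  by apply: eq_bigr => k _; rewrite AmatE mulrCA.
have Fv y : F (v * y) = 0.
  rewrite -(coordsK dimK bfree y) mulr_sumr linear_sum big1 // => i _.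
  by rewrite -scalerAr linearZ /= Fvb mulr0.
have v0 : v = 0.
  apply/eqP; apply: contraT => v_neq0; have [y0] := det_in_neq0 dimK bfree wfree.
  by rewrite -(mulVKf v_neq0 y0) Fv eqxx.
case/eqP: x_neq0; apply/rowP => k; rewrite mxE.
apply: (elimT freeP ufree (fun k => x 0 k)); rewrite -[RHS]v0.
by apply: eq_bigr => j _; rewrite nth_mktuple.
Qed.

Lemma last_elem_div_Amat_gt0 T : last_elem_div (Amat aa u b) T -> 0 < T.
Proof.
move=> /last_elem_div_gt0; apply; have := Amat_unit.
by rewrite unitmxE det_map_mx unitfE intr_eq0.
Qed.

Lemma det_in_alpha (T : int) k j :
  F (uvec u k * alpha_vec b (Amat aa u b) T j) = P * T%:~R * (k == j)%:R.
Proof.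
have : (A *m (T%:~R *: invmx A)) k j = T%:~R * (k == j)%:R.
  by rewrite -scalemxAr mulmxV ?Amat_unit // !mxE.
rewrite mxE -mulrA => <-; rewrite mulr_sumr /alpha_vec mulr_sumr linear_sum.
apply: eq_bigr => i _; rewrite -scalerAr linearZ /= AmatE.
by rewrite mulrA mulrCA mulKf // mulrC.
Qed.

Lemma det_in_uvec_mul_eq0 z : (forall k, F (uvec u k * z) = 0) -> z = coords b ord0 z *: b ord0.
Proof.
move=> Fz0; pose zc : 'cV[rat]_r.+1 := \col_i coords b (lift ord0 i) z.
have zE : z = coords b ord0 z *: b ord0 + \sum_i zc i 0 *: b (lift ord0 i).
  rewrite -{1}(coordsK dimK bfree z) big_ord_recl; congr (_ + _).
  by apply: eq_bigr => i _; rewrite mxE.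
have : A *m zc = 0.
  apply/colP => k; rewrite !mxE; apply: (mulfI P_neq0); rewrite mulr0 -[RHS](Fz0 k).
  rewrite [in RHS]zE mulrDr -scalerAr linearD linearZ /= det_in_uvec_mul_b0 mulr0 add0r.
  rewrite !mulr_sumr linear_sum; apply: eq_bigr => i _.
  by rewrite -scalerAr linearZ /= AmatE mulrA mulVKf // mulrC.
move=> /(congr1 (mulmx (invmx A))); rewrite mulKmx ?Amat_unit // mulmx0 => zc0.
by rewrite [LHS]zE big1 ?addr0 // => i _; rewrite zc0 mxE scale0r.
Qed.

Lemma coords_alpha0 (T : int) j : coords b ord0 (alpha_vec b (Amat aa u b) T j) = 0.
Proof.
rewrite linear_sum big1 // => i _.
by rewrite linearZ /= coords_basis // eq_sym (negbTE (neq_lift _ _)) mulr0.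
Qed.

Lemma dual_family_alpha (T : int) (beta : 'I_r.+1 -> K) c :
    T != 0 -> S (beta ord0) -> (forall k j, F (uvec u k * beta j) = c * (k == j)%:R) ->
  forall j, (aa (beta ord0))%:~R / T%:~R *: alpha_vec b (Amat aa u b) T j =
            beta j - coords b ord0 (beta j) *: b ord0.
Proof.
move=> T_neq0 S_beta0 Fbeta j; set s := _ / _.
have cE : c = P * (aa (beta ord0))%:~R.
  by rewrite aaE // -[beta ord0]mul1r -(uvec0 u) Fbeta eqxx mulr1.
have /det_in_uvec_mul_eq0 :
    forall k, F (uvec u k * (s *: alpha_vec b (Amat aa u b) T j - beta j)) = 0.
  move=> k; rewrite mulrBr -scalerAr linearB linearZ /= det_in_alpha Fbeta cE /s.
  by field; rewrite intr_eq0.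
rewrite linearB linearZ /= coords_alpha0 mulr0 sub0r scaleNr => /eqP.
by rewrite subr_eq addrC => /eqP ->.
Qed.

End DualFamily.

Section Comparison.
Variables (K : fieldExtType rat) (r : nat) (u : 'I_r -> K).
Hypotheses (dimK : \dim {:K} = r.+2) (ufree : free [tuple uvec u j | j < r.+1]).
Variables (L : kset K) (e : 'I_r.+2 -> K) (aa : K -> int) (P : rat) (t : int).
Hypotheses (L0 : L 0) (L_lin : forall (z : int) y1 y2, L y1 -> L y2 -> L (z%:~R * y1 + y2)).
Hypotheses (eL : Zbasis L e) (P_neq0 : P != 0).
Hypothesis aaE : forall y, L y -> P * (aa y)%:~R = det_in e (fun j => uvec u j * e ord0) y.
Hypothesis L_ue : forall k i, L (uvec u k * e (lift ord0 i)).
Hypothesis ht : last_elem_div (Amat aa u e) t.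
Variables (S : kset K) (et : 'I_r.+2 -> K) (aat : K -> int) (Pt : rat) (tt : int).
Hypotheses (etfree : free [tuple et k | k < r.+2]) (et0 : et ord0 = 1) (Pt_neq0 : Pt != 0).
Hypothesis aatE : forall y, S y -> Pt * (aat y)%:~R = det_in et (uvec u) y.
Hypothesis S_uet : forall k i, S (uvec u k * et (lift ord0 i)).
Hypothesis L_ete : forall i, L (et (lift ord0 i) * e ord0).
Hypothesis htt : last_elem_div (Amat aat u et) tt.

Local Notation alpha := (alpha_vec e (Amat aa u e) t).
Local Notation alphat := (alpha_vec et (Amat aat u et) tt).

Let efree : free [tuple e k | k < r.+2] := Zbasis_free eL.
Let wtE k : uvec u k = uvec u k * et ord0. Proof. by rewrite et0 mulr1. Qed.

Lemma alphat_mul_in k : L (alphat k * e ord0).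
Proof.
apply: alpha_vec_mul_closed htt k => //.
exact: Amat_unit dimK ufree etfree wtE Pt_neq0 aatE S_uet.
Qed.

Lemma alpha_comparison j : exists m : int,
  (aa (alphat ord0 * e ord0))%:~R / t%:~R *: alpha j = alphat j * e ord0 + m%:~R * e ord0.
Proof.
have t_gt0 := last_elem_div_Amat_gt0 dimK ufree efree (fun k => erefl) P_neq0 aaE L_ue ht.
have [C FC] := det_in_mulr_proportional e (w := fun k => uvec u k * e ord0)
  dimK etfree ufree (fun k => erefl).
have dual_alphat k i : det_in e (fun k => uvec u k * e ord0) (uvec u k * (alphat i * e ord0)) =
    C * (Pt * tt%:~R) * (k == i)%:R.
  by rewrite mulrA FC (det_in_alpha dimK ufree etfree wtE Pt_neq0 aatE S_uet) !mulrA.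
have := dual_family_alpha dimK ufree efree (fun k => erefl) P_neq0 aaE L_ue
  (lt0r_neq0 t_gt0) (alphat_mul_in ord0) dual_alphat j.
have [c cE] := Zbasis_coords eL (alphat_mul_in j).
by rewrite cE => ->; exists (- c ord0); rewrite rmorphN mulNr scaler_int mulrzl.
Qed.

End Comparison.

Unset Implicit Arguments. Set Strict Implicit.

Theorem proposition14
  (K : fieldExtType rat) (r : nat)
  (sigma : 'I_r.+2 -> {rmorphism K -> algC})
  (hdim : \dim {:K} = r.+2)
  (hsig_inj : forall i j, (forall x, sigma i x = sigma j x) -> i = j)
  (hsig_all : forall phi : {rmorphism K -> algC}, exists i, forall x, phi x = sigma i x)
  (hsig_real : forall i : 'I_r.+2, (i < r)%N -> forall x, sigma i x \is Num.real)
  (hsig_cplx : exists x, sigma (inord r) x \isn't Num.real)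
  (hsig_conj : forall x, sigma (inord r.+1) x = (sigma (inord r) x)^*)
  (f b a : K -> Prop) (q : int) (N : nat)
  (hf : int_ideal f) (hf_ne : exists x, OK x /\ ~ f x)
  (hq : 0 < q) (hfZ : forall z : int, f z%:~R <-> (q %| z)%Z)
  (hb : int_ideal b) (hbf : icoprime b f)
  (ha : int_ideal a) (hafb : icoprime a (iprod f b))
  (hcyc : exists g, generates_quot (iprod (ideal_inv a) (iprod f (ideal_inv b)))
                                    (iprod f (ideal_inv b)) g)
  (hN : ideal_norm a N)
  (u : 'I_r -> K)
  (hu : forall j, unit_pos_mod sigma f (u j))
  (hfree : free [tuple uvec u j | j < r.+1])
  (h h' : K) (m : nat)
  (hL : iprod f (ideal_inv b) h)
  (hadm1 : iprod f (ideal_inv b) (h / q%:~R - 1))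
  (hadm2 : generates_quot (iprod (ideal_inv a) (iprod f (ideal_inv b)))
                          (iprod f (ideal_inv b)) (h / N%:R))
  (hm : (0 < m)%N) (hhm : h = m%:R * h')
  (hprim : primitive_in (iprod f (ideal_inv b)) h')
  (e : 'I_r.+2 -> K) (he : Zbasis (iprod f (ideal_inv b)) e)
  (he0 : e ord0 = h') (hepos : pos_basis sigma e)
  (c : 'I_r.+1 -> 'I_r.+2 -> int)
  (hc : forall j, uvec u j * h' = \sum_(k < r.+2 | (k <= j)%N) (c j k)%:~R * e k)
  (hcpos : forall j, 0 < c j (widen_ord (leqnSn _) j))
  (aa : K -> int)
  (haa : forall y, iprod f (ideal_inv b) y ->
     ((\prod_j c j (widen_ord (leqnSn _) j))%:~R * (aa y)%:~R : rat)
       = det_in e (fun j => uvec u j * h') y)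
  (t : int) (ht : last_elem_div (Amat aa u e) t)
  (et : 'I_r.+2 -> K) (het : Zbasis (@OK K) et)
  (het0 : et ord0 = 1) (hetpos : pos_basis sigma et)
  (ct : 'I_r.+1 -> 'I_r.+2 -> int)
  (hct : forall j, uvec u j = \sum_(k < r.+2 | (k <= j)%N) (ct j k)%:~R * et k)
  (hctpos : forall j, 0 < ct j (widen_ord (leqnSn _) j))
  (aat : K -> int)
  (haat : forall y, OK y ->
     ((\prod_j ct j (widen_ord (leqnSn _) j))%:~R * (aat y)%:~R : rat)
       = det_in et (uvec u) y)
  (tt : int) (htt : last_elem_div (Amat aat u et) tt) :
  let alpha := alpha_vec e (Amat aa u e) t in
  let alphat := alpha_vec et (Amat aat u et) tt in
  let eps : int := sgz (aa (alphat ord0 * h')) in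
  let l : rat := (`|aa (alphat ord0 * h')|)%:~R / t%:~R in
  forall j : 'I_r.+1, exists mj : int,
    (eps%:~R * l) *: alpha j = alphat j * h' + mj%:~R * h'.
Proof.
move=> alpha alphat eps l j; subst h'.
have [e_L _ _] := he; have [et_OK _ _] := het.
have OKu k : OK (uvec u k) by apply: OK_uvec => i; case: (hu i).
have prod_neq0 (d : 'I_r.+1 -> int) : (forall k, 0 < d k) -> ((\prod_k d k)%:~R : rat) != 0.
  by move=> d_gt0; rewrite intr_eq0 lt0r_neq0 // prodr_gt0.
have [mj mjE] := alpha_comparison hdim hfree (iprod0 _ _) (iprod_zlin hf.1) he
  (prod_neq0 _ hcpos) haa (fun k i => iprod_OKmul hf.1 (OKu k) (e_L _)) ht
  (Zbasis_free het) het0 (prod_neq0 _ hctpos) haat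
  (fun k i => OK_mul (sigma ord0) (OKu k) (et_OK _))
  (fun i => iprod_OKmul hf.1 (et_OK _) (e_L ord0)) htt j.
exists mj; rewrite -mjE; congr (_ *: _).
by rewrite /eps /l mulrA -intrM; congr (_%:~R / _); rewrite [RHS]intEsg abszE.
Qed.
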